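(* Let $A,B$ be timed automata, $p$ a state of $T(A)$, $q$ a state of $T(B)$, and let $Z_{(A,p)}$, $Z_{(B,q)}$ be their zone graphs with node sets $S_1,S_2$ and initial nodes $s_p,s_q$. For $\beta$ a sequence over $Act\cup\{\varepsilon\}$ built from $a$, let $\mathcal{R}_\beta$ be the (largest) symmetric relation between nodes such that $(s_1,s_2)\in\mathcal{R}_\beta$ iff for all $a\in Act$ and all $s_1'$, $s_1\xrightarrow{a}s_1'$ implies there is $s_2'$ with $s_2\xrightarrow{\beta}s_2'$ and $(s_1',s_2')\in\mathcal{R}_\beta$, and for all $s_1'$, $s_1\xrightarrow{\varepsilon}s_1'$ implies there is $s_2'$ with $s_2\xrightarrow{\varepsilon}s_2'$ and $(s_1',s_2')\in\mathcal{R}_\beta$. Then: $p\sim_u q$ iff $(s_p,s_q)\in\mathcal{R}_{a}$; $p\sim_y q$ iff $(s_p,s_q)\in\mathcal{R}_{\varepsilon.a}$; $p\sim_o q$ iff $(s_p,s_q)\in\mathcal{R}_{\varepsilon.a.\varepsilon}$.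
   Context: Timed automaton $A=(L,Act,l_0,E,C)$: finite locations, actions $Act$, clocks $C$, edges $(l,g,a,R,l')$ with guard $g$ a conjunction of $x\smile c$ ($c\in\mathbb{N}$, $\smile\in\{\le,<,=,>,\ge\}$), reset set $R$. $T(A)$: states $(l,v)$, $(l,v)\xrightarrow{d}(l,v+d)$ for $d\in\mathbb{R}_{\ge0}$, $(l,v)\xrightarrow{a}(l',v[R\leftarrow0])$ if $(l,g,a,R,l')\in E$, $v\models g$. Time abstracted relations (on states, symmetric relations $\mathcal{R}$ such that whenever $p_1\mathcal{R}p_2$, and always with the delay clause: $p_1\xrightarrow{d}p_1'$ implies $\exists d'\in\mathbb{R}_{\ge0}$, $p_2'$, $p_2\xrightarrow{d'}p_2'$, $p_1'\mathcal{R}p_2'$): time abstracted bisimulation additionally requires $p_1\xrightarrow{a}p_1'$ implies $p_2\xrightarrow{a}p_2'$ with $p_1'\mathcal{R}p_2'$; time abstracted delay bisimulation requires $p_1\xrightarrow{a}p_1'$ implies $p_2\xrightarrow{d}\xrightarrow{a}p_2'$ for some $d$ with $p_1'\mathcal{R}p_2'$; time abstracted observational bisimulation requires $p_1\xrightarrow{a}p_1'$ implies $p_2\xrightarrow{d_1}\xrightarrow{a}\xrightarrow{d_2}p_2'$ for some $d_1,d_2$ with $p_1'\mathcal{R}p_2'$. $\sim_u,\sim_y,\sim_o$ are the respective largest such relations. Zone graph $Z_{(A,p)}$: finite graph whose nodes are pairs $(l,z)$, $z$ a convex zone (conjunction of $x\smile c$, $x-y\smile c$), with initial node containing $p$, built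 by forward exploration from $p$ with location-dependent maximal constant abstraction; zones of a location pairwise disjoint; each zone uniform w.r.t. the atomic guard constraints of outgoing edges (also under time elapse); pre-stable (for each edge $(l,z)\to(l',z')$ every valuation of $z$ has a successor in $z'$). Edges: $(l,z)\xrightarrow{a}(l',z')$ if every $v\in z$ has $v'\in z'$ with $(l,v)\xrightarrow{a}(l',v')$; $(l,z)\xrightarrow{\varepsilon}(l,z')$ if some $v\in z$ delays to some $v'\in z'$; $\varepsilon$ reflexive and transitive. For a sequence $\beta$, $s\xrightarrow{\beta}s'$ means a path labelled successively by the letters of $\beta$. The relation is symmetric in the sense that the conditions also hold with the roles of the two zone graphs exchanged. *)

From Stdlib Require Export Reals List ZArith Relations.
Open Scope R_scope.

Set Implicit Arguments.

Inductive cmp := CLe | CLt | CEq | CGt | CGe.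

Definition cmp_sem (o : cmp) (a b : R) : Prop :=
  match o with
  | CLe => a <= b | CLt => a < b | CEq => a = b | CGt => a > b | CGe => a >= b
  end.

Definition valuation (C : Type) := C -> R.

Record guard_atom (C : Type) := GA { ga_clk : C; ga_cmp : cmp; ga_cst : nat }.
Definition guard (C : Type) := list (guard_atom C).

Definition ga_sat (C : Type) (v : valuation C) (g : guard_atom C) : Prop :=
  cmp_sem (ga_cmp g) (v (ga_clk g)) (INR (ga_cst g)).
Definition guard_sat (C : Type) (v : valuation C) (g : guard C) : Prop :=
  forall at_, In at_ g -> ga_sat v at_.

Record ta_edge (L C Act : Type) :=
  TE { te_src : L; te_guard : guard C; te_act : Act; te_reset : list C; te_dst : L }.

Record TA (L C Act : Type) := mkTA { ta_l0 : L; ta_edges : list (ta_edge L C Act) }.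

Definition finite_type (T : Type) : Prop := exists enum : list T, forall x, In x enum.

Definition state (L C : Type) := (L * valuation C)%type.

Definition nonneg_state (L C : Type) (s : state L C) : Prop := forall x, 0 <= snd s x.

Definition delay_step (L C : Type) (s s' : state L C) (d : R) : Prop :=
  0 <= d /\ fst s' = fst s /\ forall x, snd s' x = snd s x + d.

Definition reset_rel (C : Type) (Rs : list C) (v v' : valuation C) : Prop :=
  forall x, (In x Rs -> v' x = 0) /\ (~ In x Rs -> v' x = v x).

Definition act_step (L C Act : Type) (A : TA L C Act)
    (s : state L C) (a : Act) (s' : state L C) : Prop :=
  exists e, In e (ta_edges A) /\ te_src e = fst s /\ te_act e = a /\
    guard_sat (snd s) (te_guard e) /\ te_dst e = fst s' /\
    reset_rel (te_reset e) (snd s) (snd s').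

Inductive bkind := KU | KY | KO .

Definition weak_act (k : bkind) (L C Act : Type) (A : TA L C Act)
    (s : state L C) (a : Act) (s' : state L C) : Prop :=
  match k with
  | KU => act_step A s a s'
  | KY => exists d s1, delay_step s s1 d /\ act_step A s1 a s'
  | KO => exists d1 d2 s1 s2,
            delay_step s s1 d1 /\ act_step A s1 a s2 /\ delay_step s2 s' d2
  end.

(** A relation between the states of T(A) and T(B), read as a symmetric
    relation on the disjoint union: both transfer directions are required. *)
Definition ta_bisim (k : bkind) (L1 C1 L2 C2 Act : Type)
    (A : TA L1 C1 Act) (B : TA L2 C2 Act)
    (Rl : state L1 C1 -> state L2 C2 -> Prop) : Prop :=
  forall p1 p2, Rl p1 p2 ->
    (forall d p1', delay_step p1 p1' d ->
        exists d' p2', delay_step p2 p2' d' /\ Rl p1' p2') /\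
    (forall d p2', delay_step p2 p2' d ->
        exists d' p1', delay_step p1 p1' d' /\ Rl p1' p2') /\
    (forall a p1', act_step A p1 a p1' ->
        exists p2', weak_act k B p2 a p2' /\ Rl p1' p2') /\
    (forall a p2', act_step B p2 a p2' ->
        exists p1', weak_act k A p1 a p1' /\ Rl p1' p2').

Definition ta_bisimilar (k : bkind) (L1 C1 L2 C2 Act : Type)
    (A : TA L1 C1 Act) (B : TA L2 C2 Act) (p : state L1 C1) (q : state L2 C2) : Prop :=
  exists Rl, ta_bisim k A B Rl /\ Rl p q.

Definition sim_u L1 C1 L2 C2 Act (A : TA L1 C1 Act) (B : TA L2 C2 Act) p q :=
  ta_bisimilar KU A B p q.
Definition sim_y L1 C1 L2 C2 Act (A : TA L1 C1 Act) (B : TA L2 C2 Act) p q :=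
  ta_bisimilar KY A B p q.
Definition sim_o L1 C1 L2 C2 Act (A : TA L1 C1 Act) (B : TA L2 C2 Act) p q :=
  ta_bisimilar KO A B p q.

Inductive zatom (C : Type) :=
  | ZS (x : C) (o : cmp) (c : Z)
  | ZD (x y : C) (o : cmp) (c : Z).

Definition zone (C : Type) := list (zatom C).

Definition zatom_sat (C : Type) (v : valuation C) (z : zatom C) : Prop :=
  match z with
  | ZS x o c => cmp_sem o (v x) (IZR c)
  | ZD x y o c => cmp_sem o (v x - v y) (IZR c)
  end.
Definition zone_sat (C : Type) (v : valuation C) (z : zone C) : Prop :=
  forall at_, In at_ z -> zatom_sat v at_.

Definition node (L C : Type) := (L * zone C)%type.

Definition in_node (L C : Type) (s : state L C) (n : node L C) : Prop :=
  fst s = fst n /\ zone_sat (snd s) (snd n).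

Record zone_graph (L C : Type) := ZG { zg_nodes : list (node L C); zg_init : node L C }.

Definition zg_act (L C Act : Type) (A : TA L C Act) (G : zone_graph L C)
    (n : node L C) (a : Act) (n' : node L C) : Prop :=
  In n (zg_nodes G) /\ In n' (zg_nodes G) /\
  forall s, in_node s n -> exists s', act_step A s a s' /\ in_node s' n'.

Definition zg_eps_base (L C : Type) (G : zone_graph L C) (n n' : node L C) : Prop :=
  In n (zg_nodes G) /\ In n' (zg_nodes G) /\ fst n = fst n' /\
  exists s s' d, in_node s n /\ in_node s' n' /\ delay_step s s' d.

Definition zg_eps (L C : Type) (G : zone_graph L C) : relation (node L C) :=
  clos_refl_trans (node L C) (zg_eps_base G).

Definition zg_beta (k : bkind) (L C Act : Type) (A : TA L C Act) (G : zone_graph L C)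
    (n : node L C) (a : Act) (n' : node L C) : Prop :=
  match k with
  | KU => zg_act A G n a n'
  | KY => exists m, zg_eps G n m /\ zg_act A G m a n'
  | KO => exists m m', zg_eps G n m /\ zg_act A G m a m' /\ zg_eps G m' n'
  end.

(** The conditions defining the relation R_beta between the two zone graphs
    (symmetric: conditions required in both directions). *)
Definition zg_rel (k : bkind) (L1 C1 L2 C2 Act : Type)
    (A : TA L1 C1 Act) (B : TA L2 C2 Act)
    (G1 : zone_graph L1 C1) (G2 : zone_graph L2 C2)
    (Rl : node L1 C1 -> node L2 C2 -> Prop) : Prop :=
  forall n1 n2, Rl n1 n2 ->
    (forall a n1', zg_act A G1 n1 a n1' ->
        exists n2', zg_beta k B G2 n2 a n2' /\ Rl n1' n2') /\
    (forall n1', zg_eps G1 n1 n1' ->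
        exists n2', zg_eps G2 n2 n2' /\ Rl n1' n2') /\
    (forall a n2', zg_act B G2 n2 a n2' ->
        exists n1', zg_beta k A G1 n1 a n1' /\ Rl n1' n2') /\
    (forall n2', zg_eps G2 n2 n2' ->
        exists n1', zg_eps G1 n1 n1' /\ Rl n1' n2').

Definition zg_related (k : bkind) (L1 C1 L2 C2 Act : Type)
    (A : TA L1 C1 Act) (B : TA L2 C2 Act)
    (G1 : zone_graph L1 C1) (G2 : zone_graph L2 C2)
    (n1 : node L1 C1) (n2 : node L2 C2) : Prop :=
  exists Rl, zg_rel k A B G1 G2 Rl /\ Rl n1 n2.

Definition is_zone_graph (L C Act : Type) (A : TA L C Act) (p : state L C)
    (G : zone_graph L C) : Prop :=
  In (zg_init G) (zg_nodes G) /\ in_node p (zg_init G) /\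
  (forall n, In n (zg_nodes G) ->
     (exists v, zone_sat v (snd n)) /\
     (forall v, zone_sat v (snd n) -> forall x, 0 <= v x)) /\
  (forall n1 n2, In n1 (zg_nodes G) -> In n2 (zg_nodes G) -> fst n1 = fst n2 ->
     (exists v, zone_sat v (snd n1) /\ zone_sat v (snd n2)) ->
     forall v, zone_sat v (snd n1) <-> zone_sat v (snd n2)) /\
  (forall n e g, In n (zg_nodes G) -> In e (ta_edges A) -> te_src e = fst n ->
     In g (te_guard e) ->
     forall v w, zone_sat v (snd n) -> zone_sat w (snd n) ->
       (ga_sat v g <-> ga_sat w g) /\
       ((exists d, 0 <= d /\ ga_sat (fun x => v x + d) g) <->
        (exists d, 0 <= d /\ ga_sat (fun x => w x + d) g))) /\
  (forall n s, In n (zg_nodes G) -> in_node s n ->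
     (forall a s', act_step A s a s' -> exists n', In n' (zg_nodes G) /\ in_node s' n') /\
     (forall d s', delay_step s s' d -> exists n', In n' (zg_nodes G) /\ in_node s' n')) /\
  (forall n n' s s' a, In n (zg_nodes G) -> In n' (zg_nodes G) ->
     in_node s n -> in_node s' n' -> act_step A s a s' ->
     forall t, in_node t n -> exists t', act_step A t a t' /\ in_node t' n') /\
  (forall n n' s s' d, In n (zg_nodes G) -> In n' (zg_nodes G) ->
     in_node s n -> in_node s' n' -> delay_step s s' d ->
     forall t, in_node t n -> exists t' d', delay_step t t' d' /\ in_node t' n').

(* Only two properties of a zone graph matter: forward closure (every move of a
   state of a node lands in some node, and is then matched by an edge of the
   graph) and pre-stability (an edge out of a node can be taken from every state
   of that node).  With them, a time abstracted (delay, observational)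
   bisimulation lifts to the relation "some states of n1 and n2 are related",
   and a relation on nodes descends to "s1 and s2 lie in related nodes"; an
   a-, eps.a- or eps.a.eps-path in the graph is then exactly the abstraction of a
   -a->, -d->-a-> or -d1->-a->-d2-> move. *)
From Stdlib Require Import Lra.
Open Scope R_scope.
Set Implicit Arguments.

Lemma delay_step_refl (L C : Type) (s : state L C) : delay_step s s 0.
Proof. repeat split; [lra | intros x; ring]. Qed.

Lemma delay_step_trans (L C : Type) (s1 s2 s3 : state L C) d1 d2 :
  delay_step s1 s2 d1 -> delay_step s2 s3 d2 -> delay_step s1 s3 (d1 + d2).
Proof.
  intros [Hd1 [Hl1 Hv1]] [Hd2 [Hl2 Hv2]]; repeat split; [lra | congruence |].
  intros x; rewrite Hv2, Hv1; ring.
Qed.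

Definition state_of (L C : Type) (G : zone_graph L C) (s : state L C) (n : node L C) :=
  In n (zg_nodes G) /\ in_node s n.

Record zg_sound (L C Act : Type) (A : TA L C Act) (G : zone_graph L C) : Prop := {
  zg_forward_act : forall n s a s',
    state_of G s n -> act_step A s a s' -> exists n', state_of G s' n';
  zg_forward_delay : forall n s d s',
    state_of G s n -> delay_step s s' d -> exists n', state_of G s' n';
  zg_prestable_act : forall n n' s s' a,
    state_of G s n -> state_of G s' n' -> act_step A s a s' ->
    forall t, in_node t n -> exists t', act_step A t a t' /\ in_node t' n';
  zg_prestable_delay : forall n n' s s' d,
    state_of G s n -> state_of G s' n' -> delay_step s s' d ->
    forall t, in_node t n -> exists t' d', delay_step t t' d' /\ in_node t' n' }.

Lemma is_zone_graph_sound (L C Act : Type) (A : TA L C Act) p G :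
  is_zone_graph A p G -> zg_sound A G.
Proof.
  intros (_ & _ & _ & _ & _ & Hfwd & Hpa & Hpd); split.
  - intros n s a s' [Hn Hs] Ha; exact (proj1 (Hfwd n s Hn Hs) a s' Ha).
  - intros n s d s' [Hn Hs] Hd; exact (proj2 (Hfwd n s Hn Hs) d s' Hd).
  - intros n n' s s' a [Hn Hs] [Hn' Hs']; exact (Hpa n n' s s' a Hn Hn' Hs Hs').
  - intros n n' s s' d [Hn Hs] [Hn' Hs']; exact (Hpd n n' s s' d Hn Hn' Hs Hs').
Qed.

Lemma is_zone_graph_init (L C Act : Type) (A : TA L C Act) p G :
  is_zone_graph A p G -> state_of G p (zg_init G).
Proof. intros (Hin & Hp & _); split; assumption. Qed.

Section ZoneGraph.
Variables (L C Act : Type) (A : TA L C Act) (G : zone_graph L C).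
Hypothesis hG : zg_sound A G.

Lemma zg_eps_delay n n' s : zg_eps G n n' -> state_of G s n ->
  exists d s', delay_step s s' d /\ state_of G s' n'.
Proof.
  intros Heps; revert s; induction Heps as [m m' Hbase | m | m m' m'' _ IH1 _ IH2];
    intros s Hs.
  - destruct Hbase as (_ & Hm' & _ & t & t' & d & Ht & Ht' & Hd).
    destruct (zg_prestable_delay hG (conj (proj1 Hs) Ht) (conj Hm' Ht') Hd (proj2 Hs))
      as (s' & d' & Hd' & Hs').
    exists d', s'; split; [exact Hd' | split; assumption].
  - exists 0, s; split; [apply delay_step_refl | exact Hs].
  - destruct (IH1 s Hs) as (d1 & s1 & Hd1 & Hs1).
    destruct (IH2 s1 Hs1) as (d2 & s2 & Hd2 & Hs2).
    exists (d1 + d2), s2; split; [eapply delay_step_trans; eassumption | exact Hs2].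
Qed.

Lemma delay_zg_eps n s d s' : state_of G s n -> delay_step s s' d ->
  exists n', zg_eps G n n' /\ state_of G s' n'.
Proof.
  intros Hs Hd; destruct (zg_forward_delay hG Hs Hd) as [n' Hs'].
  exists n'; split; [apply rt_step | exact Hs'].
  destruct Hs as [Hn [Hl Hz]], Hs' as [Hn' [Hl' Hz']], Hd as [Hd0 [Hdl Hdv]].
  repeat split; [assumption | assumption | congruence |].
  exists s, s', d; repeat split; assumption.
Qed.

Lemma act_zg_act n s a s' : state_of G s n -> act_step A s a s' ->
  exists n', zg_act A G n a n' /\ state_of G s' n'.
Proof.
  intros Hs Ha; destruct (zg_forward_act hG Hs Ha) as [n' Hs'].
  exists n'; split; [| exact Hs'].
  split; [exact (proj1 Hs) | split; [exact (proj1 Hs') |]].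
  exact (zg_prestable_act hG Hs Hs' Ha).
Qed.

Lemma zg_act_step n a n' s : zg_act A G n a n' -> in_node s n ->
  exists s', act_step A s a s' /\ state_of G s' n'.
Proof.
  intros (_ & Hn' & Hall) Hs; destruct (Hall s Hs) as (s' & Ha & Hs').
  exists s'; split; [exact Ha | split; assumption].
Qed.

Lemma weak_act_zg_beta {k n s a s'} : state_of G s n -> weak_act k A s a s' ->
  exists n', zg_beta k A G n a n' /\ state_of G s' n'.
Proof.
  intros Hs; destruct k; simpl.
  - apply act_zg_act, Hs.
  - intros (d & s1 & Hd & Ha).
    destruct (delay_zg_eps Hs Hd) as (m & Heps & Hs1).
    destruct (act_zg_act Hs1 Ha) as (n' & Hact & Hs').
    exists n'; split; [exists m; split; assumption | exact Hs'].
  - intros (d1 & d2 & s1 & s2 & Hd1 & Ha & Hd2).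
    destruct (delay_zg_eps Hs Hd1) as (m & Heps & Hs1).
    destruct (act_zg_act Hs1 Ha) as (m' & Hact & Hs2).
    destruct (delay_zg_eps Hs2 Hd2) as (n' & Heps' & Hs').
    exists n'; split; [exists m, m'; split; [| split]; assumption | exact Hs'].
Qed.

Lemma zg_beta_weak_act {k n s a n'} : state_of G s n -> zg_beta k A G n a n' ->
  exists s', weak_act k A s a s' /\ state_of G s' n'.
Proof.
  intros Hs; destruct k; simpl.
  - intros Hact; apply (zg_act_step Hact), Hs.
  - intros (m & Heps & Hact).
    destruct (zg_eps_delay Heps Hs) as (d & s1 & Hd & Hs1).
    destruct (zg_act_step Hact (proj2 Hs1)) as (s' & Ha & Hs').
    exists s'; split; [exists d, s1; split; assumption | exact Hs'].
  - intros (m & m' & Heps & Hact & Heps').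
    destruct (zg_eps_delay Heps Hs) as (d1 & s1 & Hd1 & Hs1).
    destruct (zg_act_step Hact (proj2 Hs1)) as (s2 & Ha & Hs2).
    destruct (zg_eps_delay Heps' Hs2) as (d2 & s' & Hd2 & Hs').
    exists s'; split; [exists d1, d2, s1, s2; split; [| split]; assumption | exact Hs'].
Qed.

End ZoneGraph.

Definition ta_sim (k : bkind) (L1 C1 L2 C2 Act : Type)
    (A : TA L1 C1 Act) (B : TA L2 C2 Act)
    (R : state L1 C1 -> state L2 C2 -> Prop) : Prop :=
  forall p1 p2, R p1 p2 ->
    (forall d p1', delay_step p1 p1' d -> exists d' p2', delay_step p2 p2' d' /\ R p1' p2') /\
    (forall a p1', act_step A p1 a p1' -> exists p2', weak_act k B p2 a p2' /\ R p1' p2').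

Definition zg_sim (k : bkind) (L1 C1 L2 C2 Act : Type)
    (A : TA L1 C1 Act) (B : TA L2 C2 Act)
    (G1 : zone_graph L1 C1) (G2 : zone_graph L2 C2)
    (Rz : node L1 C1 -> node L2 C2 -> Prop) : Prop :=
  forall n1 n2, Rz n1 n2 ->
    (forall a n1', zg_act A G1 n1 a n1' -> exists n2', zg_beta k B G2 n2 a n2' /\ Rz n1' n2') /\
    (forall n1', zg_eps G1 n1 n1' -> exists n2', zg_eps G2 n2 n2' /\ Rz n1' n2').

Lemma ta_bisim_sim k L1 C1 L2 C2 Act (A : TA L1 C1 Act) (B : TA L2 C2 Act) R :
  ta_bisim k A B R <-> ta_sim k A B R /\ ta_sim k B A (fun s2 s1 => R s1 s2).
Proof.
  split.
  - intros H; split; intros x y Hxy; destruct (H _ _ Hxy) as (? & ? & ? & ?); split; assumption.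
  - intros [H1 H2] x y Hxy; destruct (H1 _ _ Hxy), (H2 _ _ Hxy); repeat split; assumption.
Qed.

Lemma zg_rel_sim k L1 C1 L2 C2 Act (A : TA L1 C1 Act) (B : TA L2 C2 Act) G1 G2 Rz :
  zg_rel k A B G1 G2 Rz <-> zg_sim k A B G1 G2 Rz /\ zg_sim k B A G2 G1 (fun n2 n1 => Rz n1 n2).
Proof.
  split.
  - intros H; split; intros x y Hxy; destruct (H _ _ Hxy) as (? & ? & ? & ?); split; assumption.
  - intros [H1 H2] x y Hxy; destruct (H1 _ _ Hxy), (H2 _ _ Hxy); repeat split; assumption.
Qed.

Definition zg_lift (L1 C1 L2 C2 : Type) (G1 : zone_graph L1 C1) (G2 : zone_graph L2 C2)
    (R : state L1 C1 -> state L2 C2 -> Prop) (n1 : node L1 C1) (n2 : node L2 C2) : Prop :=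
  exists s1 s2, state_of G1 s1 n1 /\ state_of G2 s2 n2 /\ R s1 s2.

Definition ta_lift (L1 C1 L2 C2 : Type) (G1 : zone_graph L1 C1) (G2 : zone_graph L2 C2)
    (Rz : node L1 C1 -> node L2 C2 -> Prop) (s1 : state L1 C1) (s2 : state L2 C2) : Prop :=
  exists n1 n2, state_of G1 s1 n1 /\ state_of G2 s2 n2 /\ Rz n1 n2.

Section Transfer.
Variables (k : bkind) (L1 C1 L2 C2 Act : Type) (A : TA L1 C1 Act) (B : TA L2 C2 Act)
  (G1 : zone_graph L1 C1) (G2 : zone_graph L2 C2).
Hypotheses (hG1 : zg_sound A G1) (hG2 : zg_sound B G2).

(* Stated for any [Rz] equivalent to the lift, so that it also applies to the
   flipped lift in the converse direction. *)
Lemma zg_sim_lift {R Rz} : ta_sim k A B R ->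
  (forall n1 n2, Rz n1 n2 <-> zg_lift G1 G2 R n1 n2) -> zg_sim k A B G1 G2 Rz.
Proof.
  intros HR HRz n1 n2 Hn; apply HRz in Hn as (s1 & s2 & Hs1 & Hs2 & Hs).
  destruct (HR s1 s2 Hs) as [Hdelay Hact]; split.
  - intros a n1' Hz.
    destruct (zg_act_step Hz (proj2 Hs1)) as (s1' & Ha & Hs1').
    destruct (Hact a s1' Ha) as (s2' & Hw & Hs').
    destruct (weak_act_zg_beta hG2 Hs2 Hw) as (n2' & Hb & Hs2').
    exists n2'; split; [exact Hb | apply HRz; exists s1', s2'; auto].
  - intros n1' Heps.
    destruct (zg_eps_delay hG1 Heps Hs1) as (d & s1' & Hd & Hs1').
    destruct (Hdelay d s1' Hd) as (d' & s2' & Hd' & Hs').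
    destruct (delay_zg_eps hG2 Hs2 Hd') as (n2' & Heps' & Hs2').
    exists n2'; split; [exact Heps' | apply HRz; exists s1', s2'; auto].
Qed.

Lemma ta_sim_lift {Rz R} : zg_sim k A B G1 G2 Rz ->
  (forall s1 s2, R s1 s2 <-> ta_lift G1 G2 Rz s1 s2) -> ta_sim k A B R.
Proof.
  intros HRz HR s1 s2 Hs; apply HR in Hs as (n1 & n2 & Hs1 & Hs2 & Hn).
  destruct (HRz n1 n2 Hn) as [Hact Heps]; split.
  - intros d s1' Hd.
    destruct (delay_zg_eps hG1 Hs1 Hd) as (n1' & He & Hs1').
    destruct (Heps n1' He) as (n2' & He' & Hn').
    destruct (zg_eps_delay hG2 He' Hs2) as (d' & s2' & Hd' & Hs2').
    exists d', s2'; split; [exact Hd' | apply HR; exists n1', n2'; auto].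
  - intros a s1' Ha.
    destruct (act_zg_act hG1 Hs1 Ha) as (n1' & Hz & Hs1').
    destruct (Hact a n1' Hz) as (n2' & Hb & Hn').
    destruct (zg_beta_weak_act hG2 Hs2 Hb) as (s2' & Hw & Hs2').
    exists s2'; split; [exact Hw | apply HR; exists n1', n2'; auto].
Qed.

End Transfer.

Lemma ta_bisimilar_zg_related k (Act L1 C1 L2 C2 : Type)
  (A : TA L1 C1 Act) (B : TA L2 C2 Act) (p : state L1 C1) (q : state L2 C2)
  (G1 : zone_graph L1 C1) (G2 : zone_graph L2 C2)
  (hG1 : zg_sound A G1) (hG2 : zg_sound B G2)
  (hp : state_of G1 p (zg_init G1)) (hq : state_of G2 q (zg_init G2)) :
  ta_bisimilar k A B p q <-> zg_related k A B G1 G2 (zg_init G1) (zg_init G2).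
Proof.
  split.
  - intros (R & HR & Hpq); apply ta_bisim_sim in HR as [HAB HBA].
    exists (zg_lift G1 G2 R); split.
    + apply zg_rel_sim; split.
      * exact (zg_sim_lift hG1 hG2 HAB (fun _ _ => iff_refl _)).
      * apply (zg_sim_lift hG2 hG1 HBA); unfold zg_lift; firstorder.
    + exists p, q; auto.
  - intros (Rz & HRz & Hpq); apply zg_rel_sim in HRz as [HAB HBA].
    exists (ta_lift G1 G2 Rz); split.
    + apply ta_bisim_sim; split.
      * exact (ta_sim_lift hG1 hG2 HAB (fun _ _ => iff_refl _)).
      * apply (ta_sim_lift hG2 hG1 HBA); unfold ta_lift; firstorder.
    + exists (zg_init G1), (zg_init G2); auto.
Qed.

Theorem theorem5 (Act L1 C1 L2 C2 : Type)
  (fL1 : finite_type L1) (fC1 : finite_type C1)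
  (fL2 : finite_type L2) (fC2 : finite_type C2)
  (A : TA L1 C1 Act) (B : TA L2 C2 Act)
  (p : state L1 C1) (q : state L2 C2)
  (hp : nonneg_state p) (hq : nonneg_state q)
  (G1 : zone_graph L1 C1) (G2 : zone_graph L2 C2)
  (hG1 : is_zone_graph A p G1) (hG2 : is_zone_graph B q G2) :
  (sim_u A B p q <-> zg_related KU A B G1 G2 (zg_init G1) (zg_init G2)) /\
  (sim_y A B p q <-> zg_related KY A B G1 G2 (zg_init G1) (zg_init G2)) /\
  (sim_o A B p q <-> zg_related KO A B G1 G2 (zg_init G1) (zg_init G2)).
Proof.
  pose proof (is_zone_graph_sound hG1) as sound1.
  pose proof (is_zone_graph_sound hG2) as sound2.
  pose proof (is_zone_graph_init hG1) as init1.
  pose proof (is_zone_graph_init hG2) as init2.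
  split; [| split]; exact (ta_bisimilar_zg_related _ sound1 sound2 init1 init2).
Qed.
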